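(* Let $\mathcal{L}$ and $T$ be as in the context, and let $X$ be an $\exists$-simple set. (1) If $f\colon X\to Y$ is $\exists$-strongly definable and $Z\subseteq X$ is $\exists$-simple, then the restriction $f|_Z\colon Z\to Y$ is $\exists$-strongly definable. (2) If $f\colon X\to Y$ and $g\colon Y\to Z$ are $\exists$-strongly definable (with $Y$ $\exists$-simple), then so is $g\circ f$. (3) The $\exists$-strongly definable functions $X\to\mathrm{VF}$ form a ring under pointwise addition and multiplication. (4) If $f\colon X\to\mathrm{RV}_{n_1}\times\dots\times\mathrm{RV}_{n_r}$ is a definable function whose graph is $\exists$-simple, then $f$ is $\exists$-strongly definable.
   Context: $\mathcal{L}_{\mathrm{RV}}$ is the multisorted language with sorts $\mathrm{VF}$ (valued field) and $\mathrm{RV}_N$ ($N\ge1$), where for a valued field $K$ with valuation ring $\mathcal{O}_K$ and maximal ideal $\mathcal{M}_K$, $\mathrm{RV}_N=K^\times/(1+N\mathcal{M}_K)\cup\{0\}$; it contains the ring language on $\mathrm{VF}$, multiplication, constants $0,1$, a divisibility relation $\mid$ (comparison of valuations) and a partial-addition relation $\oplus$ on each $\mathrm{RV}_N$, the projections $\mathrm{rv}_N\colon\mathrm{VF}\to\mathrm{RV}_N$, $\mathrm{rv}_{N,M}\colon\mathrm{RV}_M\to\mathrm{RV}_N$ ($N\mid M$), and Hensel-lift relation symbols $P_{N,d}$ on $\mathrm{RV}_N\times\mathrm{RV}_{N^2}^{d+1}$. $\mathcal{L}$ is an expansion of $\mathcal{L}_{\mathrm{RV}}$ by constants and by function and relation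 symbols not involving $\mathrm{VF}$, and $T$ is an $\mathcal{L}$-theory containing the theory of nontrivially valued Henselian valued fields of characteristic zero. Definable sets/functions are those defined by $\mathcal{L}$-formulas in all models of $T$; formulas are equivalent if equivalent modulo $T$; a definable function $f\colon X\to Y$ is a family of functions with domain exactly $X$ whose graph is definable. An $\exists$-simple formula is one of the form $(\exists\xi\in\mathrm{RV}_{n'_1}\times\dots\times\mathrm{RV}_{n'_s})\psi(x,\xi)$ with $\psi$ quantifier-free; an $\exists$-simple set is one defined by such a formula. If the graph of $f$ is given by $\varphi(x,y)$, then for a formula $\psi(y,z)$, $\psi(f(x),z)$ abbreviates $\exists y(\varphi(x,y)\wedge\psi(y,z))$. For $X$ $\exists$-simple, a definable $f\colon X\to Y$ is $\exists$-strongly definable if for every $\exists$-simple formula $\psi(y,z)$ there is an $\exists$-simple formula $\chi(x,z)$ such that $\psi(f(x),z)$ is equivalent to $\chi(x,z)$. *)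

(* A deep embedding of the multisorted language L_RV
   (expanded by RV-only symbols and constants) and its semantics in
   Henselian nontrivially valued fields of characteristic 0. *)
From mathcomp Require Import all_boot all_algebra.
From Stdlib Require Import ClassicalEpsilon.
Set Implicit Arguments.
Unset Strict Implicit.
Unset Printing Implicit Defensive.
Import GRing.Theory.
Local Open Scope ring_scope.

(* Sorts: VF, and RVs n which stands for RV_{n+1} (so N = n.+1 >= 1). *)
Inductive Lsort := VFs | RVs of nat.

Definition sort_eq_dec (a b : Lsort) : {a = b} + {a <> b}.
Proof. decide equality; apply PeanoNat.Nat.eq_dec. Defined.

Definition var := (Lsort * nat)%type.

Definition var_eq_dec (v w : var) : {v = w} + {v <> w}.
Proof. decide equality; [apply PeanoNat.Nat.eq_dec | apply sort_eq_dec]. Defined.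

(* maximal ideal of the valuation ring O: the non-units of O *)
Definition maxi (K : fieldType) (O : K -> Prop) (m : K) : Prop :=
  O m /\ (m = 0 \/ ~ O m^-1).

(* the class of x in RV_{n+1} = K^x/(1 + (n+1) M_K) u {0} *)
Definition rvcls (K : fieldType) (O : K -> Prop) (n : nat) (x : K) : K -> Prop :=
  fun y => (x = 0 /\ y = 0) \/
           (x <> 0 /\ exists m, maxi O m /\ y = x * (1 + n.+1%:R * m)).

Definition rvT (K : fieldType) (O : K -> Prop) (n : nat) : Type :=
  {A : K -> Prop | exists x, A = rvcls O n x}.

Definition rv (K : fieldType) (O : K -> Prop) (n : nat) (x : K) : rvT O n :=
  exist _ (rvcls O n x) (ex_intro _ x erefl).

Definition rvrep (K : fieldType) (O : K -> Prop) (n : nat) (a : rvT O n) : K :=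
  proj1_sig (constructive_indefinite_description _ (proj2_sig a)).

Definition rvin (K : fieldType) (O : K -> Prop) (n : nat) (x : K) (a : rvT O n) : Prop :=
  proj1_sig a x.

(* extra VF constants; extra function symbols RV^k -> RV (RV constants are
   the 0-ary ones); extra relation symbols on RV sorts.  Sort indices n
   mean RV_{n+1}. *)
Record sig := Sig {
  vcst : Type;
  fsym : Type;
  fdom : fsym -> seq nat;
  fcod : fsym -> nat;
  rsym : Type;
  rdom : rsym -> seq nat }.

Record Lstruct (S : sig) := LStruct {
  LK : fieldType;
  LO : LK -> Prop;
  LO1 : LO 1;
  LOD : forall x y, LO x -> LO y -> LO (x + y);
  LON : forall x, LO x -> LO (- x);
  LOM : forall x y, LO x -> LO y -> LO (x * y);
  LOV : forall x : LK, x != 0 -> LO x \/ LO x^-1;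
  Lnontriv : exists x : LK, ~ LO x;
  Lchar0 : forall n : nat, n.+1%:R != 0 :> LK;
  Lhensel : forall p : {poly LK}, (forall i, LO p`_i) ->
    forall a, LO a -> maxi LO p.[a] -> ~ maxi LO (p^`()).[a] ->
    exists b, LO b /\ p.[b] = 0 /\ maxi LO (b - a);
  Lvc : vcst S -> LK;
  Lfn : forall f : fsym S,
    (forall i : 'I_(size (fdom f)), rvT LO (nth 0%N (fdom f) i)) -> rvT LO (fcod f);
  Lrl : forall r : rsym S,
    (forall i : 'I_(size (rdom r)), rvT LO (nth 0%N (rdom r) i)) -> Prop }.

Definition carrier (S : sig) (M : Lstruct S) (s : Lsort) : Type :=
  match s with VFs => LK M | RVs n => rvT (@LO S M) n end.

Definition asg (S : sig) (M : Lstruct S) := forall v : var, carrier M v.1.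

Definition upd (S : sig) (M : Lstruct S) (rho : asg M) (v : var) (a : carrier M v.1)
  : asg M :=
  fun w => match var_eq_dec v w with
           | left e => eq_rect v (fun u => carrier M u.1) a w e
           | right _ => rho w end.

Inductive term (S : sig) : Lsort -> Type :=
| tvar : forall s, nat -> term S s
| tvc : vcst S -> term S VFs
| t0 : term S VFs
| t1 : term S VFs
| tadd : term S VFs -> term S VFs -> term S VFs
| topp : term S VFs -> term S VFs
| tmul : term S VFs -> term S VFs -> term S VFs
| trv : forall n, term S VFs -> term S (RVs n)
| trvrv : forall n m, (n.+1 %| m.+1)%N -> term S (RVs m) -> term S (RVs n)
| trv0 : forall n, term S (RVs n)
| trv1 : forall n, term S (RVs n)
| trvmul : forall n, term S (RVs n) -> term S (RVs n) -> term S (RVs n)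
| tfn : forall f : fsym S,
    (forall i : 'I_(size (fdom f)), term S (RVs (nth 0%N (fdom f) i))) ->
    term S (RVs (fcod f)).

Inductive formula (S : sig) : Type :=
| feq : forall s, term S s -> term S s -> formula S
| fdiv : forall n, term S (RVs n) -> term S (RVs n) -> formula S
| fplus : forall n, term S (RVs n) -> term S (RVs n) -> term S (RVs n) -> formula S
| fhens : forall n d, term S (RVs n) ->
    ('I_d.+1 -> term S (RVs ((n.+1 ^ 2).-1))) -> formula S
| frel : forall r : rsym S,
    (forall i : 'I_(size (rdom r)), term S (RVs (nth 0%N (rdom r) i))) -> formula S
| ftrue : formula S
| fnot : formula S -> formula S
| fand : formula S -> formula S -> formula S
| for_ : formula S -> formula S -> formula S
| fex : var -> formula S -> formula S.

Fixpoint teval (S : sig) (M : Lstruct S) (rho : asg M) (s : Lsort) (t : term S s)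
  : carrier M s :=
  match t in term _ s0 return carrier M s0 with
  | tvar s i => rho (s, i)
  | tvc c => Lvc M c
  | t0 => (0 : LK M)
  | t1 => (1 : LK M)
  | tadd a b => ((teval rho a : LK M) + (teval rho b : LK M) : LK M)
  | topp a => (- (teval rho a : LK M) : LK M)
  | tmul a b => ((teval rho a : LK M) * (teval rho b : LK M) : LK M)
  | trv n a => rv (@LO S M) n (teval rho a : LK M)
  | trvrv n m _ a => rv (@LO S M) n (rvrep (teval rho a : rvT (@LO S M) m))
  | trv0 n => rv (@LO S M) n 0
  | trv1 n => rv (@LO S M) n 1
  | trvmul n a b => rv (@LO S M) n (rvrep (teval rho a : rvT (@LO S M) n)
                                   * rvrep (teval rho b : rvT (@LO S M) n))
  | tfn f args => @Lfn S M f (fun i => teval rho (args i))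
  end.

Fixpoint holds (S : sig) (M : Lstruct S) (rho : asg M) (phi : formula S) : Prop :=
  match phi with
  | feq s a b => teval rho a = teval rho b
  | fdiv n a b =>                       (* v(a) <= v(b) *)
      let x := rvrep (teval rho a : rvT (@LO S M) n) in
      let y := rvrep (teval rho b : rvT (@LO S M) n) in
      y = 0 \/ (x <> 0 /\ LO (y / x))
  | fplus n a b c =>                    (* a (+) b = c, where defined *)
      forall x y : LK M, rvin x (teval rho a : rvT (@LO S M) n) ->
        rvin y (teval rho b : rvT (@LO S M) n) ->
        rvin (x + y) (teval rho c : rvT (@LO S M) n)
  | fhens n d a e =>
      forall cs : 'I_d.+1 -> LK M,
        (forall i, rvin (cs i) (teval rho (e i) : rvT (@LO S M) _)) ->
        exists x : LK M, rvin x (teval rho a : rvT (@LO S M) n) /\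
          \sum_(i < d.+1) cs i * x ^+ i = 0
  | frel r args => @Lrl S M r (fun i => teval rho (args i))
  | ftrue => True
  | fnot p => ~ holds rho p
  | fand p q => holds rho p /\ holds rho q
  | for_ p q => holds rho p \/ holds rho q
  | fex v p => exists a : carrier M v.1, holds (@upd S M rho v a) p
  end.

Fixpoint tfv (S : sig) (P : var -> Prop) (s : Lsort) (t : term S s) : Prop :=
  match t with
  | tvar s i => P (s, i)
  | tvc _ | t0 | t1 | trv0 _ | trv1 _ => True
  | tadd a b | tmul a b | trvmul _ a b => tfv P a /\ tfv P b
  | topp a | trv _ a | trvrv _ _ _ a => tfv P a
  | tfn f args => forall i, tfv P (args i)
  end.

Fixpoint ffv (S : sig) (P : var -> Prop) (phi : formula S) : Prop :=
  match phi with
  | feq _ a b | fdiv _ a b => tfv P a /\ tfv P b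
  | fplus _ a b c => [/\ tfv P a, tfv P b & tfv P c]
  | fhens _ _ a e => tfv P a /\ forall i, tfv P (e i)
  | frel r args => forall i, tfv P (args i)
  | ftrue => True
  | fnot p => ffv P p
  | fand p q | for_ p q => ffv P p /\ ffv P q
  | fex v p => ffv (fun w => w = v \/ P w) p
  end.

Fixpoint qf (S : sig) (phi : formula S) : Prop :=
  match phi with
  | fex _ _ => False
  | fnot p => qf p
  | fand p q | for_ p q => qf p /\ qf q
  | _ => True
  end.

Inductive esimple (S : sig) : formula S -> Prop :=
| es_qf : forall phi, qf phi -> esimple phi
| es_ex : forall n i phi, esimple phi -> esimple (fex (RVs n, i) phi).

Definition theory (S : sig) (T : formula S -> Prop) : Prop :=
  forall phi, T phi -> ffv (fun _ => False) phi.

Definition models (S : sig) (T : formula S -> Prop) (M : Lstruct S) : Prop :=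
  forall phi, T phi -> forall rho : asg M, holds rho phi.

Fixpoint tuple (S : sig) (M : Lstruct S) (ss : seq Lsort) : Type :=
  match ss with [::] => unit | s :: ss' => (carrier M s * tuple M ss')%type end.

Fixpoint tget (S : sig) (M : Lstruct S) (rho : asg M) (ss : seq Lsort) (off : nat)
  : tuple M ss :=
  match ss return tuple M ss with
  | [::] => tt
  | s :: ss' => (rho (s, off), tget rho ss' off.+1)
  end.

Definition varset (ss : seq Lsort) (off : nat) (v : var) : Prop :=
  (off <= v.2 < off + size ss)%N /\ v.1 = nth VFs ss (v.2 - off).

Definition dset (S : sig) (ss : seq Lsort) := forall M : Lstruct S, tuple M ss -> Prop.

Definition fullset (S : sig) (ss : seq Lsort) : dset S ss := fun _ _ => True.

Definition defines (S : sig) (T : formula S -> Prop) (ss : seq Lsort)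
  (X : dset S ss) (phi : formula S) : Prop :=
  ffv (varset ss 0) phi /\
  forall M, models T M -> forall rho : asg M, holds rho phi <-> X M (tget rho ss 0).

Definition definable S T ss (X : dset S ss) := exists phi, defines T X phi.
Definition esimple_set S T ss (X : dset S ss) := exists phi, esimple phi /\ defines T X phi.

(* a family of functions; only its values on the domain X matter *)
Definition dfunc (S : sig) (ss ts : seq Lsort) :=
  forall M : Lstruct S, tuple M ss -> tuple M ts.

Definition defines_graph (S : sig) (T : formula S -> Prop) (ss ts : seq Lsort)
  (X : dset S ss) (F : dfunc S ss ts) (phi : formula S) : Prop :=
  ffv (varset (ss ++ ts) 0) phi /\
  forall M, models T M -> forall rho : asg M,
    holds rho phi <-> (X M (tget rho ss 0) /\ tget rho ts (size ss) = F M (tget rho ss 0)).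

Definition definable_fun (S : sig) (T : formula S -> Prop) (ss ts : seq Lsort)
  (X : dset S ss) (Y : dset S ts) (F : dfunc S ss ts) : Prop :=
  definable T X /\ definable T Y /\
  (forall M, models T M -> forall x, X M x -> Y M (F M x)) /\
  exists phi, defines_graph T X F phi.

(* F : X -> Y is exists-strongly definable: X exists-simple, F definable and
   for every exists-simple psi(y,z) there is an exists-simple chi(x,z) with
   psi(F(x),z) <-> chi(x,z) modulo T, where psi(F(x),z) is
   exists y (graph(x,y) /\ psi(y,z)).  Variables: in psi, y is the block at 0
   and z the block at size ts; in chi, x at 0 and z at size ss. *)
Definition estrong (S : sig) (T : formula S -> Prop) (ss ts : seq Lsort)
  (X : dset S ss) (Y : dset S ts) (F : dfunc S ss ts) : Prop :=
  esimple_set T X /\ definable_fun T X Y F /\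
  forall (us : seq Lsort) (psi : formula S),
    esimple psi -> ffv (varset (ts ++ us) 0) psi ->
    exists chi, esimple chi /\ ffv (varset (ss ++ us) 0) chi /\
      forall M, models T M -> forall rho : asg M,
        holds rho chi <->
        (X M (tget rho ss 0) /\
         exists rho' : asg M, tget rho' ts 0 = F M (tget rho ss 0) /\
           tget rho' us (size ts) = tget rho us (size ss) /\ holds rho' psi).

Definition vf_val (S : sig) (M : Lstruct S) (a : tuple M [:: VFs]) : LK M := a.1.
Definition vf_tup (S : sig) (M : Lstruct S) (a : LK M) : tuple M [:: VFs] := (a, tt).

Definition fadd S ss (F G : dfunc S ss [:: VFs]) : dfunc S ss [:: VFs] :=
  fun M x => vf_tup (vf_val (F M x) + vf_val (G M x)).
Definition fmul S ss (F G : dfunc S ss [:: VFs]) : dfunc S ss [:: VFs] :=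
  fun M x => vf_tup (vf_val (F M x) * vf_val (G M x)).
Definition fopp S ss (F : dfunc S ss [:: VFs]) : dfunc S ss [:: VFs] :=
  fun M x => vf_tup (- vf_val (F M x)).
Definition fzero S ss : dfunc S ss [:: VFs] := fun M _ => vf_tup (0 : LK M).
Definition fone S ss : dfunc S ss [:: VFs] := fun M _ => vf_tup (1 : LK M).

(** The exists-simple sets are closed under intersection, under projection along
   RV-coordinates and under preimages by substitutions of terms; for intersection and
   substitution one first puts the existential RV-quantifiers in front and renames the
   bound variables into a fresh block.  Exists-strong definability of F : X -> Y says
   that {(x, z) | x in X, psi(F x, z)} is exists-simple whenever psi is; pulling back the
   diagonal shows that it also makes the graph of F definable.  Restriction intersects
   with Z and composition pulls back twice.  A function with exists-simple graph into
   RV-sorts pulls psi back to exists y, graph(x, y) /\ psi(y, z).  The pair (F, G)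
   pulls psi back along F and then along G, evaluated on a second copy of x which is
   finally identified with the first; composing with the term maps a + b, a * b, -a
   and the constants 0, 1 yields the ring structure. *)

From mathcomp Require Import all_boot all_algebra zify.
From Stdlib Require Import FunctionalExtensionality Eqdep_dec.
Set Implicit Arguments.
Unset Strict Implicit.
Unset Printing Implicit Defensive.

Arguments var_eq_dec : simpl never.

Section Syntax.
Variable S : sig.

Lemma tfv_mono (P P' : var -> Prop) s (t : term S s) :
  (forall w, P w -> P' w) -> tfv P t -> tfv P' t.
Proof. by move=> sub; elim: t => //=; intuition. Qed.

Lemma ffv_mono (phi : formula S) (P P' : var -> Prop) :
  (forall w, P w -> P' w) -> ffv P phi -> ffv P' phi.
Proof.
elim: phi P P' => /= [s a b|n a b|n a b c|n d a e|r args||p IH|p IHp q IHq|p IHp q IHq|v p IH]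
  P P' sub.
- by case=> ? ?; split; apply: tfv_mono sub _.
- by case=> ? ?; split; apply: tfv_mono sub _.
- by case=> ? ? ?; split; apply: tfv_mono sub _.
- by case=> ? He; split=> [|i]; apply: tfv_mono sub _.
- by move=> He i; apply: tfv_mono sub _.
- by [].
- exact: IH.
- by case=> ? ?; split; [apply: IHp sub _ | apply: IHq sub _].
- by case=> ? ?; split; [apply: IHp sub _ | apply: IHq sub _].
- by apply: IH => w [->|/sub]; auto.
Qed.

Fixpoint tsubst (sg : forall u : var, term S u.1) s (t : term S s) : term S s :=
  match t in term _ s0 return term S s0 with
  | tvar s i => sg (s, i)
  | tvc c => tvc c
  | t0 => t0 S
  | t1 => t1 S
  | tadd a b => tadd (tsubst sg a) (tsubst sg b)
  | topp a => topp (tsubst sg a)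
  | tmul a b => tmul (tsubst sg a) (tsubst sg b)
  | trv n a => trv n (tsubst sg a)
  | trvrv n m h a => trvrv h (tsubst sg a)
  | trv0 n => trv0 S n
  | trv1 n => trv1 S n
  | trvmul n a b => trvmul (tsubst sg a) (tsubst sg b)
  | tfn f args => tfn (fun i => tsubst sg (args i))
  end.

Fixpoint fsubst (sg : forall u : var, term S u.1) (phi : formula S) : formula S :=
  match phi with
  | feq s a b => feq (tsubst sg a) (tsubst sg b)
  | fdiv n a b => fdiv (tsubst sg a) (tsubst sg b)
  | fplus n a b c => fplus (tsubst sg a) (tsubst sg b) (tsubst sg c)
  | fhens n d a e => fhens (tsubst sg a) (fun i => tsubst sg (e i))
  | frel r args => frel (fun i => tsubst sg (args i))
  | ftrue => ftrue S
  | fnot p => fnot (fsubst sg p)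
  | fand p q => fand (fsubst sg p) (fsubst sg q)
  | for_ p q => for_ (fsubst sg p) (fsubst sg q)
  | fex v p => fex v (fsubst sg p)
  end.

Lemma qf_fsubst sg (phi : formula S) : qf phi -> qf (fsubst sg phi).
Proof. by elim: phi => //=; intuition. Qed.

Lemma tfv_tsubst (P P' : var -> Prop) sg s (t : term S s) :
  (forall u, P u -> tfv P' (sg u)) -> tfv P t -> tfv P' (tsubst sg t).
Proof. by move=> Hsg; elim: t => //=; [by move=> ? ? /Hsg | ..]; intuition. Qed.

Lemma ffv_fsubst (P P' : var -> Prop) sg (phi : formula S) :
  (forall u, P u -> tfv P' (sg u)) -> qf phi -> ffv P phi -> ffv P' (fsubst sg phi).
Proof.
move=> Hsg; have ts := tfv_tsubst Hsg.
elim: phi => //= [s a b|n a b|n a b c|n d a e|r args|p IHp q IHq|p IHp q IHq].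
- by move=> _ [? ?]; split; apply: ts.
- by move=> _ [? ?]; split; apply: ts.
- by move=> _ [? ? ?]; split; apply: ts.
- by move=> _ [? He]; split=> [|i]; apply: ts.
- by move=> _ He i; apply: ts.
- by move=> [? ?] [? ?]; split; [apply: IHp | apply: IHq].
- by move=> [? ?] [? ?]; split; [apply: IHp | apply: IHq].
Qed.

End Syntax.

Section Blocks.
Implicit Types (ss us : seq Lsort) (w : var).

Lemma varset_bound ss o w : varset ss o w -> o <= w.2 < o + size ss.
Proof. by case. Qed.

Lemma varset_hd s ss o : varset (s :: ss) o (s, o).
Proof. by rewrite /varset /= subnn; split=> //; lia. Qed.

Lemma varset_tl {s ss o w} : varset ss o.+1 w -> varset (s :: ss) o w.
Proof.
case: w => ws wi [/= lim ->]; split; first by rewrite /=; lia.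
by have -> : wi - o = (wi - o.+1).+1 by lia.
Qed.

Lemma varset_cons_inv s ss o w : varset (s :: ss) o w -> w = (s, o) \/ varset ss o.+1 w.
Proof.
case: w => ws wi [/= lim Es]; case: (eqVneq wi o) => [Eo|Eo].
- by left; rewrite Eo subnn in Es *; rewrite Es.
- right; split; first by rewrite /=; lia.
  have Ei : wi - o = (wi - o.+1).+1 by lia.
  by rewrite Ei in Es.
Qed.

Lemma varset_catl ss us o w : varset ss o w -> varset (ss ++ us) o w.
Proof.
case: w => ws wi; rewrite /varset /= size_cat nth_cat => -[lim ->]; split; first lia.
by have -> : wi - o < size ss by lia.
Qed.

Lemma varset_catr ss us o w : varset us (o + size ss) w -> varset (ss ++ us) o w.
Proof.
case: w => ws wi; rewrite /varset /= size_cat nth_cat => -[lim ->]; split; first lia.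
have -> : wi - o < size ss = false by lia.
by congr nth; lia.
Qed.

Lemma varset_cat_inv ss us o w :
  varset (ss ++ us) o w -> varset ss o w \/ varset us (o + size ss) w.
Proof.
case: w => ws wi; rewrite /varset /= size_cat nth_cat => -[lim].
case: ltnP => lt_ss ->; [left | right]; split=> //; try lia.
by congr nth; lia.
Qed.

Lemma varset_shift ss o o' s k k' :
  varset ss o (s, k) -> k' = k - o + o' -> varset ss o' (s, k').
Proof. by rewrite /varset /= => -[lim ->] ->; split; [lia | congr nth; lia]. Qed.

End Blocks.

Section Assignments.
Variables (S : sig) (M : Lstruct S).
Implicit Types (rho r : asg M) (v w : var).

Lemma upd_same rho v a : @upd S M rho v a v = a.
Proof.
by rewrite /upd; case: (var_eq_dec v v) => [e|//]; rewrite (UIP_dec var_eq_dec e erefl).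
Qed.

Lemma upd_other rho v a w : v <> w -> @upd S M rho v a w = rho w.
Proof. by rewrite /upd; case: (var_eq_dec v w). Qed.

Lemma asg_pair r w : r (w.1, w.2) = r w.
Proof. by case: w. Qed.

Lemma teval_ext (P : var -> Prop) r1 r2 s (t : term S s) :
  (forall w, P w -> r1 w = r2 w) -> tfv P t -> teval r1 t = teval r2 t.
Proof.
move=> r12; elim: t => /=; [by move=> ? ? /r12 | ..]; try by intuition congruence.
move=> f args IH Hargs; congr (Lfn _); apply: functional_extensionality_dep => i.
exact: IH.
Qed.

Lemma holds_ext (phi : formula S) (P : var -> Prop) r1 r2 :
  (forall w, P w -> r1 w = r2 w) -> ffv P phi -> (holds r1 phi <-> holds r2 phi).
Proof.
elim: phi P r1 r2 => /= [s a b|n a b|n a b c|n d a e|rs args||p IH|p IHp q IHq|p IHp q IHq|v p IH]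
  P r1 r2 r12.
- by case=> Ha Hb; rewrite (teval_ext r12 Ha) (teval_ext r12 Hb).
- by case=> Ha Hb; rewrite (teval_ext r12 Ha) (teval_ext r12 Hb).
- by case=> Ha Hb Hc; rewrite (teval_ext r12 Ha) (teval_ext r12 Hb) (teval_ext r12 Hc).
- case=> Ha He; have Ee i : teval r1 (e i) = teval r2 (e i) by apply: teval_ext r12 (He i).
  by rewrite (teval_ext r12 Ha); split=> hens cs Hcs; apply: hens => i; rewrite ?Ee // -Ee.
- move=> Hargs; suff -> : (fun i => teval r1 (args i)) = (fun i => teval r2 (args i)) by [].
  by apply: functional_extensionality_dep => i; apply: teval_ext r12 (Hargs i).
- by [].
- by move=> Hp; rewrite (IH _ _ _ r12 Hp).
- by case=> Hp Hq; rewrite (IHp _ _ _ r12 Hp) (IHq _ _ _ r12 Hq).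
- by case=> Hp Hq; rewrite (IHp _ _ _ r12 Hp) (IHq _ _ _ r12 Hq).
- move=> Hp; have E a : holds (@upd S M r1 v a) p <-> holds (@upd S M r2 v a) p.
    apply: (IH _ _ _ _ Hp) => w Hw; rewrite /upd; case: var_eq_dec => // vw.
    by case: Hw => [wv|/r12//]; case: vw.
  by split=> -[a Ha]; exists a; apply/E.
Qed.

Lemma teval_tsubst r sg s (t : term S s) :
  teval r (tsubst sg t) = teval (fun u => teval r (sg u)) t.
Proof.
elim: t => //=; try by move=> *; congruence.
move=> f args IH; congr (Lfn _); apply: functional_extensionality_dep => i; exact: IH.
Qed.

Lemma holds_fsubst sg (phi : formula S) r :
  qf phi -> (holds r (fsubst sg phi) <-> holds (fun u => teval r (sg u)) phi).
Proof.
elim: phi r => //= [s a b|n a b|n a b c|n d a e|rs args|p IH|p IHp q IHq|p IHp q IHq] r.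
- by rewrite !teval_tsubst.
- by rewrite !teval_tsubst.
- by rewrite !teval_tsubst.
- by rewrite teval_tsubst; split=> hens cs Hcs; apply: hens => i; move: (Hcs i);
    rewrite teval_tsubst.
- by move=> _; rewrite (functional_extensionality_dep _ _ (fun i => teval_tsubst r sg (args i))).
- by move=> Hp; rewrite IH.
- by move=> [Hp Hq]; rewrite IHp // IHq.
- by move=> [Hp Hq]; rewrite IHp // IHq.
Qed.

End Assignments.

Section Tuples.
Variables (S : sig) (M : Lstruct S).
Implicit Types (r : asg M) (w : var) (ss us : seq Lsort) (o : nat).

Fixpoint tput r ss o : tuple M ss -> asg M :=
  match ss return tuple M ss -> asg M with
  | [::] => fun _ => r
  | s :: ss' => fun a => @upd S M (@tput r ss' o.+1 a.2) (s, o) a.1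
  end.
Arguments tput : clear implicits.

Lemma tput_out r ss o a w : ~ varset ss o w -> tput r ss o a w = r w.
Proof.
elim: ss o a => [|s ss IH] o a //= Nw.
rewrite upd_other => [|Ew]; last by apply: Nw; rewrite -Ew; apply: varset_hd.
by apply: IH => Hw; apply: Nw; apply: varset_tl.
Qed.

Lemma tput_agree r1 r2 ss o a w :
  (~ varset ss o w -> r1 w = r2 w) -> tput r1 ss o a w = tput r2 ss o a w.
Proof.
elim: ss o a => [|s ss IH] o a /= E12.
  by apply: E12 => /varset_bound; rewrite addn0; lia.
rewrite /upd; case: var_eq_dec => // Nw; apply: IH => Hw; apply: E12.
by case/varset_cons_inv => // Ew; apply: Nw.
Qed.

Lemma tput_upd r ss o a v x : ~ varset ss o v ->
  tput (@upd S M r v x) ss o a = @upd S M (tput r ss o a) v x.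
Proof.
move=> Nv; apply: functional_extensionality_dep => w.
case: (var_eq_dec v w) => [<-|Nw]; first by rewrite tput_out // !upd_same.
by rewrite upd_other // (@tput_agree _ r) // => _; rewrite upd_other.
Qed.

Lemma tget_ext r1 r2 ss o :
  (forall w, varset ss o w -> r1 w = r2 w) -> tget r1 ss o = tget r2 ss o.
Proof.
elim: ss o => [|s ss IH] o //= E12.
by rewrite (E12 (s, o) (varset_hd _ _ _)) (IH o.+1 (fun w Hw => E12 w (varset_tl Hw))).
Qed.

Lemma tget_eq_var r1 r2 ss o w :
  tget r1 ss o = tget r2 ss o -> varset ss o w -> r1 w = r2 w.
Proof.
elim: ss o => [|s ss IH] o /=; first by move=> _ /varset_bound /=; lia.
by case=> E1 E2 /varset_cons_inv [->|]; last apply: IH.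
Qed.

Lemma holds_tget r1 r2 ss o (phi : formula S) :
  ffv (varset ss o) phi -> tget r1 ss o = tget r2 ss o -> (holds r1 phi <-> holds r2 phi).
Proof. by move=> Hphi E12; apply: holds_ext Hphi => w; apply: tget_eq_var. Qed.

Lemma tput_get r ss o a : tget (tput r ss o a) ss o = a.
Proof.
elim: ss o a => [|s ss IH] o [] //= x a; rewrite upd_same -[in RHS](IH o.+1 a).
congr pair; apply: tget_ext => w /varset_bound Hw.
by apply: upd_other => Ew; rewrite -Ew /= in Hw; lia.
Qed.

Lemma tget_tput_disjoint r ss us o o' a :
  o + size ss <= o' \/ o' + size us <= o -> tget (tput r us o' a) ss o = tget r ss o.
Proof.
move=> disj; apply: tget_ext => w /varset_bound Hw; apply: tput_out => /varset_bound; lia.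
Qed.

Fixpoint tcat ss us : tuple M ss -> tuple M us -> tuple M (ss ++ us) :=
  match ss return tuple M ss -> tuple M us -> tuple M (ss ++ us) with
  | [::] => fun _ z => z
  | s :: ss' => fun x z => (x.1, @tcat ss' us x.2 z)
  end.

Fixpoint tsplit ss us : tuple M (ss ++ us) -> tuple M ss * tuple M us :=
  match ss return tuple M (ss ++ us) -> tuple M ss * tuple M us with
  | [::] => fun t => (tt, t)
  | s :: ss' => fun t => ((t.1, (@tsplit ss' us t.2).1), (@tsplit ss' us t.2).2)
  end.
Arguments tsplit : clear implicits.

Lemma tsplit_cat ss us (x : tuple M ss) (z : tuple M us) : tsplit ss us (tcat x z) = (x, z).
Proof. by elim: ss x => [|s ss IH] [] //= y x; rewrite IH. Qed.

Lemma tget_cat r ss us o :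
  tget r (ss ++ us) o = tcat (tget r ss o) (tget r us (o + size ss)).
Proof. by elim: ss o => [|s ss IH] o /=; rewrite ?addn0 // IH addnS. Qed.

Lemma tcat_inj ss us (x x' : tuple M ss) (z z' : tuple M us) :
  tcat x z = tcat x' z' -> x = x' /\ z = z'.
Proof. by move=> /(congr1 (tsplit ss us)); rewrite !tsplit_cat => -[-> ->]. Qed.

Lemma tget_shift r (g : nat -> nat) ss o o' :
  (forall k, o <= k < o + size ss -> g k = k - o + o') ->
  tget (fun u => r (u.1, g u.2)) ss o = tget r ss o'.
Proof.
elim: ss o o' => [|s ss IH] o o' //= Hg; rewrite Hg ?subnn //=; last lia.
by rewrite (IH o.+1 o'.+1) // => k Hk; rewrite Hg; lia.
Qed.

Lemma tget_cat_eq r ss us o (x : tuple M ss) (z : tuple M us) :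
  tget r (ss ++ us) o = tcat x z <-> tget r ss o = x /\ tget r us (o + size ss) = z.
Proof. by rewrite tget_cat; split=> [/tcat_inj //|[-> ->]]. Qed.

Lemma tsplit_tget r ss us o :
  tsplit ss us (tget r (ss ++ us) o) = (tget r ss o, tget r us (o + size ss)).
Proof. by rewrite tget_cat tsplit_cat. Qed.

End Tuples.
Arguments tput {S M} r ss o a.
Arguments tsplit {S M} ss us t.

Section Prenex.
Variable S : sig.
Implicit Types (phi th : formula S) (P : var -> Prop).

Fixpoint fexs (rs : seq Lsort) (o : nat) phi : formula S :=
  if rs is s :: rs' then fex (s, o) (fexs rs' o.+1 phi) else phi.

Lemma esimple_fexs ns o phi : esimple phi -> esimple (fexs (map RVs ns) o phi).
Proof. by elim: ns o => [|n ns IH] o //= Hphi; apply/es_ex/IH. Qed.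

Lemma ffv_fexs rs o P phi :
  ffv (fun w => varset rs o w \/ P w) phi -> ffv P (fexs rs o phi).
Proof.
elim: rs o P => [|s rs IH] o P /= Hphi.
  by apply: ffv_mono Hphi => w [/varset_bound /= | //]; lia.
by apply: IH; apply: ffv_mono Hphi => w [/varset_cons_inv [|]|]; auto.
Qed.

Lemma holds_fexs (M : Lstruct S) (r : asg M) rs o phi :
  holds r (fexs rs o phi) <-> exists a : tuple M rs, holds (tput r rs o a) phi.
Proof.
elim: rs o r => [|s rs IH] o r /=; first by split=> [|[]]; [exists tt|].
have fresh : ~ varset rs o.+1 (s, o) by move=> /varset_bound /=; lia.
split=> [[x /IH [a Ha]]|[[x a] Ha]]; first by exists (x, a); rewrite /= -tput_upd.
by exists x; apply/IH; exists a; rewrite tput_upd.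
Qed.

Definition rename_var (v : var) (k : nat) (u : var) : term S u.1 :=
  tvar S u.1 (if var_eq_dec u v then k else u.2).

(* The bound variables land in a block at any large enough offset [K], so that two
   prenex forms can be put side by side and terms substituted without capture. *)
Lemma esimple_prenex phi : esimple phi -> forall P, ffv P phi ->
  exists K0, forall K, K0 <= K -> (forall w, P w -> w.2 < K) ->
  exists ns th, [/\ qf th, ffv (fun w => varset (map RVs ns) K w \/ P w) th &
    forall M (r : asg M), holds r phi <-> exists a, holds (tput r (map RVs ns) K a) th].
Proof.
elim=> [th qth|n i psi _ IH] P Hphi.
  exists 0 => K _ _; exists [::], th; split=> // [|M r].
    by apply: ffv_mono Hphi; right.
  by split=> [|[[]]]; [exists tt|].
pose v := (RVs n, i); have [K0 HK0] := IH _ Hphi.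
exists (maxn K0 i.+1) => K; rewrite geq_max => /andP [K0K iK] PK.
have PvK : forall w, w = v \/ P w -> w.2 < K.+1 by move=> w [->|/PK] /=; lia.
have [ns [th [qth fth hth]]] := HK0 K.+1 (leqW K0K) PvK.
exists (n :: ns), (fsubst (rename_var v K) th); split.
- exact: qf_fsubst.
- apply: (ffv_fsubst (sg := rename_var v K) _ qth fth) => -[ws wi] Hw.
  rewrite /rename_var /=.
  case: (var_eq_dec (ws, wi) v) => [E|Nv] /=; first by case: E => ->; left; apply: varset_hd.
  case: Hw => [Hb|[/Nv//|Pw]]; [left; exact: varset_tl Hb | by right].
move=> M r.
have Kfresh w : varset (map RVs ns) K.+1 w \/ w = v \/ P w -> w <> (RVs n, K).
  move=> Hw Ew; rewrite Ew /v in Hw.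
  by case: Hw => [/varset_bound /=|[[]|/PK /=]]; lia.
have vfresh : ~ varset (map RVs ns) K.+1 v by move=> /varset_bound /=; lia.
have key x a : holds (tput (@upd S M r v x) (map RVs ns) K.+1 a) th <->
    holds (tput r (map RVs (n :: ns)) K (x, a)) (fsubst (rename_var v K) th).
  rewrite holds_fsubst //; apply: (holds_ext _ fth) => w Hw; rewrite /rename_var.
  case: (var_eq_dec w v) => [Ew|Nv] /=; first by subst w; rewrite tput_out // !upd_same.
  rewrite upd_other ?asg_pair; last by rewrite -surjective_pairing; apply/nesym/Kfresh.
  by apply: tput_agree => _; rewrite upd_other // => /esym.
rewrite /=; split=> [[x /hth [a Ha]]|[[x a] /key Ha]]; first by exists (x, a); apply/key.
by exists x; apply/hth; exists a.
Qed.

End Prenex.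

Section ExistsSimpleSets.
Variables (S : sig) (T : formula S -> Prop).

Lemma esimple_set_prenex ss (X : dset S ss) B : esimple_set T X ->
  exists K ns th, [/\ B <= K, qf th,
    ffv (fun w => varset (map RVs ns) K w \/ varset ss 0 w) th &
    forall M, models T M -> forall rho : asg M,
      X M (tget rho ss 0) <-> exists a, holds (tput rho (map RVs ns) K a) th].
Proof.
case=> phi [ephi [fphi dphi]]; have [K0 HK0] := esimple_prenex ephi fphi.
pose K := maxn K0 (maxn B (size ss)).
have below w : varset ss 0 w -> w.2 < K by move=> /varset_bound; rewrite /K; lia.
have [ns [th [qth fth hth]]] := HK0 K (leq_maxl _ _) below.
exists K, ns, th; split=> //; first by rewrite /K; lia.
by move=> M HM rho; rewrite -dphi.
Qed.

Lemma esimple_set_ext ss (X Y : dset S ss) : esimple_set T X ->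
  (forall M, models T M -> forall x, X M x <-> Y M x) -> esimple_set T Y.
Proof.
case=> phi [ephi [fphi dphi]] XY; exists phi; split=> //; split=> // M HM rho.
by rewrite -XY // dphi.
Qed.

Lemma esimple_setI ss (X Y : dset S ss) : esimple_set T X -> esimple_set T Y ->
  esimple_set T (fun M x => X M x /\ Y M x).
Proof.
move=> /(esimple_set_prenex (size ss)) [K1 [ns1 [th1 [ssK1 qth1 fth1 hth1]]]].
move=> /(esimple_set_prenex (K1 + size ns1)) [K2 [ns2 [th2 [K1K2 qth2 fth2 hth2]]]].
set rs1 := map RVs ns1; set rs2 := map RVs ns2.
exists (fexs rs1 K1 (fexs rs2 K2 (fand th1 th2))); split.
  by do 2!apply: esimple_fexs; apply: es_qf.
split.
  by do 2!apply: ffv_fexs; split; [apply: ffv_mono fth1 | apply: ffv_mono fth2]; intuition.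
move=> M HM rho; rewrite hth1 // hth2 // holds_fexs.
have E1 a1 a2 : holds (tput (tput rho rs1 K1 a1) rs2 K2 a2) th1 <->
    holds (tput rho rs1 K1 a1) th1.
  apply: (holds_ext _ fth1) => w Hw; apply: tput_out => /varset_bound.
  by case: Hw => /varset_bound; rewrite /rs1 size_map; lia.
have E2 a1 a2 : holds (tput (tput rho rs1 K1 a1) rs2 K2 a2) th2 <->
    holds (tput rho rs2 K2 a2) th2.
  apply: (holds_ext _ fth2) => w Hw; apply: tput_agree => Nw.
  by case: Hw => // /varset_bound Hw; apply: tput_out => /varset_bound; lia.
split=> [[a1 /holds_fexs [a2 [/E1 H1 /E2 H2]]]|[[a1 H1] [a2 H2]]].
  by split; [exists a1 | exists a2].
by exists a1; apply/holds_fexs; exists a2; split; [apply/E1 | apply/E2].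
Qed.

Lemma esimple_set_proj ss ns (X : dset S (ss ++ map RVs ns)) : esimple_set T X ->
  esimple_set T (fun M x => exists y, X M (tcat x y)).
Proof.
case=> phi [ephi [fphi dphi]]; set rs := map RVs ns.
exists (fexs rs (size ss) phi); split; first exact: esimple_fexs.
split.
  apply: ffv_fexs; apply: ffv_mono fphi => w /varset_cat_inv [|]; rewrite ?add0n; by [right | left].
move=> M HM rho; rewrite holds_fexs.
have E a : holds (tput rho rs (size ss) a) phi <-> X M (tcat (tget rho ss 0) a).
  by rewrite dphi // tget_cat tget_tput_disjoint ?add0n ?tput_get //; left.
by split=> -[a /E Ha]; exists a.
Qed.

Lemma esimple_set_subst ss ts (X : dset S ss) (Y : dset S ts) (sg : forall u : var, term S u.1) :
  esimple_set T Y -> (forall u, varset ts 0 u -> tfv (varset ss 0) (sg u)) ->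
  (forall M, models T M -> forall rho : asg M,
     X M (tget rho ss 0) <-> Y M (tget (fun u => teval rho (sg u)) ts 0)) ->
  esimple_set T X.
Proof.
move=> /(esimple_set_prenex (maxn (size ts) (size ss))) [K [ns [th [bK qth fth hth]]]] Hsg XY.
set rs := map RVs ns.
pose sg' u : term S u.1 := if u.2 < K then sg u else tvar S u.1 u.2.
exists (fexs rs K (fsubst sg' th)); split; first exact/esimple_fexs/es_qf/qf_fsubst.
split.
  apply/ffv_fexs/(ffv_fsubst _ qth fth) => u; rewrite /sg'.
  case=> /[dup] /varset_bound Hu.
    by rewrite ifF /= -?surjective_pairing; [left | lia].
  by rewrite ifT; [move/Hsg; apply: tfv_mono; right | lia].
move=> M HM rho; rewrite XY // hth // holds_fexs.
have E a : holds (tput (fun u => teval rho (sg u)) rs K a) th <->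
    holds (tput rho rs K a) (fsubst sg' th).
  rewrite holds_fsubst //; apply: (holds_ext _ fth) => w; rewrite /sg'.
  case=> /[dup] Vw /varset_bound Hw.
    by rewrite ifF /= ?asg_pair; [apply: tput_agree | lia].
  rewrite ifT ?tput_out; [|by move/varset_bound; lia|lia].
  apply: teval_ext (Hsg _ Vw) => w' /varset_bound Hw'.
  by rewrite tput_out // => /varset_bound; lia.
by split=> -[a /E Ha]; exists a.
Qed.

Lemma esimple_set_ren ss ts (Y : dset S ts) (h : forall M, tuple M ss -> tuple M ts)
    (g : nat -> nat) :
  esimple_set T Y -> (forall u, varset ts 0 u -> varset ss 0 (u.1, g u.2)) ->
  (forall M (rho : asg M), h M (tget rho ss 0) = tget (fun u => rho (u.1, g u.2)) ts 0) ->
  esimple_set T (fun M x => Y M (h M x)).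
Proof.
move=> HY Hg hg; apply: (esimple_set_subst (sg := fun u => tvar S u.1 (g u.2))) HY _ _ => //.
by move=> M _ rho; rewrite hg.
Qed.

Lemma esimple_set_widen ss us (X : dset S ss) : esimple_set T X ->
  esimple_set T (fun M xz => X M (tsplit ss us xz).1).
Proof.
case=> phi [ephi [fphi dphi]]; exists phi; split=> //; split.
  by apply: ffv_mono fphi => w /varset_catl.
by move=> M HM rho; rewrite tsplit_tget dphi.
Qed.

Lemma esimple_set_catA ss ts us (X : dset S ((ss ++ ts) ++ us)) : esimple_set T X ->
  esimple_set T (fun M w => let w' := tsplit ss (ts ++ us) w in
                            let yz := tsplit ts us w'.2 in X M (tcat (tcat w'.1 yz.1) yz.2)).
Proof.
case=> phi [ephi [fphi dphi]]; exists phi; split=> //; split; first by rewrite catA.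
by move=> M HM rho; rewrite /= !tsplit_tget dphi // !tget_cat size_cat addnA.
Qed.

Lemma esimple_set_swap ss ts us (Y : dset S (ss ++ ts ++ us)) : esimple_set T Y ->
  esimple_set T (fun M w => let yw := tsplit ts (ss ++ us) w in
                            let xz := tsplit ss us yw.2 in Y M (tcat xz.1 (tcat yw.1 xz.2))).
Proof.
pose n := size ss; pose m := size ts.
pose g k := if k < n then k + m else if k < n + m then k - n else k.
move=> HY; apply: (esimple_set_ren (g := g) HY) => [[s k]|M rho].
  move=> /varset_cat_inv [Hs|/varset_cat_inv [Hs|Hs]]; have /= B := varset_bound Hs;
    rewrite /g /=; do ![case: ltnP => ? /=]; try lia.
  - by apply/varset_catr/varset_catl; apply: (varset_shift Hs); lia.
  - by apply/varset_catl; apply: (varset_shift Hs); lia.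
  - by apply/varset_catr/varset_catr; apply: (varset_shift Hs); lia.
rewrite !tsplit_tget /= !tget_cat; congr (tcat _ (tcat _ _)); apply/esym/tget_shift;
  by move=> k Hk; rewrite /g; do ![case: ltnP => ? /=]; lia.
Qed.

Lemma esimple_set_dup ss us (Y : dset S (ss ++ ss ++ us)) : esimple_set T Y ->
  esimple_set T (fun M xz => Y M (tcat (tsplit ss us xz).1 xz)).
Proof.
pose g k := if k < size ss then k else k - size ss.
move=> HY; apply: (esimple_set_ren (g := g) HY) => [[s k]|M rho].
  case/varset_cat_inv => Hs; have /= B := varset_bound Hs; rewrite /g; case: ltnP => /= ?;
    try lia; first exact: varset_catl.
  by apply: (varset_shift Hs); lia.
rewrite tsplit_tget [in RHS]tget_cat /=; congr tcat; apply/esym/tget_shift;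
  by move=> k Hk; rewrite /g; case: ltnP => ? /=; lia.
Qed.

Lemma esimple_set_insert ss us ts (Y : dset S (ss ++ ts)) : esimple_set T Y ->
  esimple_set T (fun M w => let xzy := tsplit (ss ++ us) ts w in
                            Y M (tcat (tsplit ss us xzy.1).1 xzy.2)).
Proof.
pose g k := if k < size ss then k else k + size us.
move=> HY; apply: (esimple_set_ren (g := g) HY) => [[s k]|M rho].
  case/varset_cat_inv => Hs; have /= B := varset_bound Hs; rewrite /g; case: ltnP => /= ?;
    try lia; first exact/varset_catl/varset_catl.
  by apply: varset_catr; apply: (varset_shift Hs); rewrite size_cat; lia.
rewrite !tsplit_tget /= [in RHS]tget_cat; congr tcat; apply/esym/tget_shift;
  by move=> k Hk; rewrite /g; case: ltnP => ? /=; rewrite ?size_cat; lia.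
Qed.

Lemma esimple_set_rotate ss us ts (Y : dset S (ts ++ us)) : esimple_set T Y ->
  esimple_set T (fun M w => let xzy := tsplit (ss ++ us) ts w in
                            Y M (tcat xzy.2 (tsplit ss us xzy.1).2)).
Proof.
pose g k := if k < size ts then k + size ss + size us else k - size ts + size ss.
move=> HY; apply: (esimple_set_ren (g := g) HY) => [[s k]|M rho].
  case/varset_cat_inv => Hs; have /= B := varset_bound Hs; rewrite /g; case: ltnP => /= ?;
    try lia.
    by apply: varset_catr; apply: (varset_shift Hs); rewrite size_cat; lia.
  by apply/varset_catl/varset_catr; apply: (varset_shift Hs); lia.
rewrite !tsplit_tget /= [in RHS]tget_cat; congr tcat; apply/esym/tget_shift;
  by move=> k Hk; rewrite /g; case: ltnP => ? /=; rewrite ?size_cat; lia.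
Qed.

End ExistsSimpleSets.

Section Pullbacks.
Variables (S : sig) (T : formula S -> Prop).

(* The clause of [estrong], for sets instead of formulas: psi(F x, z) is
   exists-simple in (x, z) whenever psi(y, z) is exists-simple. *)
Definition esimple_pullback ss ts (X : dset S ss) (F : dfunc S ss ts) :=
  forall us (Psi : dset S (ts ++ us)), esimple_set T Psi ->
  esimple_set T (fun M xz => let x := (tsplit ss us xz).1 in
                             X M x /\ Psi M (tcat (F M x) (tsplit ss us xz).2)).

Lemma esimple_pullback_restrict ss ts (X Z : dset S ss) (F : dfunc S ss ts) :
  esimple_pullback X F -> esimple_set T Z ->
  (forall M, models T M -> forall x, Z M x -> X M x) -> esimple_pullback Z F.
Proof.
move=> HF HZ ZX us Psi /HF HXPsi.
apply: esimple_set_ext (esimple_setI (esimple_set_widen us HZ) HXPsi) _ => M HM xz /=.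
by split=> [[? [? ?]]|[? ?]]; do ?split=> //; apply: ZX.
Qed.

Lemma esimple_pullback_comp ss ts us (X : dset S ss) (Y : dset S ts)
    (F : dfunc S ss ts) (G : dfunc S ts us) :
  esimple_pullback X F -> esimple_pullback Y G ->
  (forall M, models T M -> forall x, X M x -> Y M (F M x)) ->
  esimple_pullback X (fun M x => G M (F M x)).
Proof.
move=> HF HG XY vs Psi /HG /HF HXYPsi; apply: esimple_set_ext HXYPsi _ => M HM xz /=.
by rewrite tsplit_cat /=; split=> [[? [? ?]]|[? ?]]; do ?split=> //; apply: XY.
Qed.

Lemma esimple_pullback_pair ss ts1 ts2 (X : dset S ss)
    (F : dfunc S ss ts1) (G : dfunc S ss ts2) :
  esimple_pullback X F -> esimple_pullback X G ->
  esimple_pullback X (fun M x => tcat (F M x) (G M x)).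
Proof.
move=> HF HG us Psi /esimple_set_catA /HF /esimple_set_swap /HG /esimple_set_dup HPsi.
apply: esimple_set_ext HPsi _ => M _ xz /=; rewrite !tsplit_cat /=.
by split=> [[? [? ?]]|[? ?]].
Qed.

(* The branch [0, RVs _] is junk: position 0 of the block [VFs :: us] has sort VF. *)
Definition head_subst (e : term S VFs) (sh : nat) (s : Lsort) (k : nat) : term S s :=
  match k, s return term S s with
  | 0, VFs => e
  | 0, s => tvar S s 0
  | k'.+1, s => tvar S s (k' + sh)
  end.

Lemma tget_head_subst M (rho : asg M) e sh us o :
  tget (fun u => teval rho (head_subst e sh u.1 u.2)) us o.+1 = tget rho us (o + sh).
Proof. by elim: us o => [|s us IH] o //=; rewrite IH. Qed.

Lemma esimple_pullback_term ss (X : dset S ss) (e : term S VFs)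
    (f : forall M, tuple M ss -> LK M) :
  esimple_set T X -> tfv (varset ss 0) e ->
  (forall M (rho : asg M), teval rho e = f M (tget rho ss 0)) ->
  esimple_pullback X (fun M x => vf_tup (f M x)).
Proof.
move=> HX He ef us Psi HPsi.
have HPsi' : esimple_set T (fun M xz => Psi M (f M (tsplit ss us xz).1, (tsplit ss us xz).2)).
  apply: (esimple_set_subst (sg := fun u => head_subst e (size ss) u.1 u.2)) HPsi _ _.
    case=> s k /varset_cons_inv [[-> ->]|].
      exact: tfv_mono (fun w => @varset_catl ss us 0 w) He.
    case: k => [/varset_bound /=|k Hu /=]; first lia.
    by apply: varset_catr; apply: (varset_shift Hu); lia.
  by move=> M _ rho; rewrite tsplit_tget /= ef tget_head_subst.
exact: esimple_set_ext (esimple_setI (esimple_set_widen us HX) HPsi') _.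
Qed.

Lemma esimple_pullback_of_graph ss ns (X : dset S ss) (F : dfunc S ss (map RVs ns)) phi :
  esimple phi -> defines_graph T X F phi -> esimple_pullback X F.
Proof.
move=> ephi [fphi dphi] us Psi /(esimple_set_rotate ss) HPsi.
set ts := map RVs ns.
pose Gr : dset S (ss ++ ts) := fun M xy =>
  X M (tsplit ss ts xy).1 /\ (tsplit ss ts xy).2 = F M (tsplit ss ts xy).1.
have /(esimple_set_insert us) HGr : esimple_set T Gr.
  by exists phi; split=> //; split=> // M HM rho; rewrite /Gr tsplit_tget add0n dphi.
apply: esimple_set_ext (esimple_set_proj (esimple_setI HGr HPsi)) _ => M _ xz /=.
rewrite /Gr; split=> [[y]|[HX HP]]; first by rewrite !tsplit_cat /= => -[[HX ->] HP].
by exists (F M (tsplit ss us xz).1); rewrite !tsplit_cat.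
Qed.

Fixpoint feq_block (ts : seq Lsort) (o1 o2 : nat) : formula S :=
  if ts is s :: ts' then fand (feq (tvar S s o1) (tvar S s o2)) (feq_block ts' o1.+1 o2.+1)
  else ftrue S.

Lemma ffv_feq_block (P : var -> Prop) ts o1 o2 :
  (forall w, varset ts o1 w \/ varset ts o2 w -> P w) -> ffv P (feq_block ts o1 o2).
Proof.
elim: ts o1 o2 => //= s ts IH o1 o2 sub.
split; first by split; apply: sub; [left | right]; apply: varset_hd.
by apply: IH => w [] /varset_tl Hw; apply: sub; [left | right].
Qed.

Lemma esimple_set_diag ts : esimple_set T (fun M yz => (tsplit ts ts yz).2 = (tsplit ts ts yz).1).
Proof.
exists (feq_block ts (size ts) 0); split.
  by apply: es_qf; elim: ts (size ts) 0 => //= s ts IH o1 o2; split.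
split=> [|M _ rho].
  by apply: ffv_feq_block => w [/(varset_catr (o := 0)) | /varset_catl].
rewrite tsplit_tget add0n; elim: ts (size ts) 0 => //= s ts IH o1 o2.
by rewrite IH; split=> [[-> ->]|[-> ->]].
Qed.

Lemma esimple_pullback_defines_graph ss ts (X : dset S ss) (F : dfunc S ss ts) :
  esimple_pullback X F -> exists phi, defines_graph T X F phi.
Proof.
move=> /(_ ts _ (esimple_set_diag ts)) [phi [_ [fphi dphi]]].
exists phi; split=> // M HM rho.
by rewrite dphi // tsplit_tget /= tsplit_cat add0n.
Qed.

Lemma estrong_pullback ss ts (X : dset S ss) (Y : dset S ts) (F : dfunc S ss ts) :
  estrong T X Y F -> esimple_pullback X F.
Proof.
case=> _ [_ strongF] us Psi [psi [epsi [fpsi dpsi]]].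
have [chi [echi [fchi dchi]]] := strongF us psi epsi fpsi.
exists chi; split=> //; split=> // M HM rho; rewrite dchi // tsplit_tget add0n /=.
apply: and_iff_compat_l; split=> [[r [E1 [E2 /(dpsi _ HM)]]]|HPsi].
  by rewrite tget_cat E1 E2.
pose r := tput rho (ts ++ us) 0 (tcat (F M (tget rho ss 0)) (tget rho us (size ss))).
have Er : tget r (ts ++ us) 0 = tcat _ _ := tput_get _ _ _.
move: (Er) => /tget_cat_eq [E1]; rewrite add0n => E2.
by exists r; do 2!split=> //; apply/(dpsi _ HM); rewrite Er.
Qed.

Lemma estrong_of_pullback ss ts (X : dset S ss) (Y : dset S ts) (F : dfunc S ss ts) :
  esimple_set T X -> definable T Y ->
  (forall M, models T M -> forall x, X M x -> Y M (F M x)) ->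
  esimple_pullback X F -> estrong T X Y F.
Proof.
move=> HX HY XY HF; split=> //; split.
  split; first by case: HX => phi [_ ?]; exists phi.
  by do 2!split=> //; apply: esimple_pullback_defines_graph HF.
move=> us psi epsi fpsi.
pose Psi : dset S (ts ++ us) := fun M yz =>
  exists r : asg M, tget r (ts ++ us) 0 = yz /\ holds r psi.
have /HF [chi [echi [fchi dchi]]] : esimple_set T Psi.
  exists psi; split=> //; split=> // M _ rho.
  by split=> [Hr|[r [Er /(holds_tget fpsi Er)]]] //; exists rho.
exists chi; split=> //; split=> // M HM rho; rewrite dchi // tsplit_tget add0n /=.
apply: and_iff_compat_l; split=> [[r [/tget_cat_eq [E1 E2] Hr]]|[r [E1 [E2 Hr]]]]; exists r.
  by rewrite add0n in E2.
by split=> //; apply/tget_cat_eq; rewrite add0n.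
Qed.

Lemma esimple_set_full ts : esimple_set T (@fullset S ts).
Proof. by exists (ftrue S); split; [apply: es_qf | split]. Qed.

Lemma esimple_pullback_binop ss (X : dset S ss) (F G : dfunc S ss [:: VFs])
    (e : term S VFs) (op : forall M : Lstruct S, LK M -> LK M -> LK M) :
  tfv (varset [:: VFs; VFs] 0) e ->
  (forall M (rho : asg M), teval rho e = op M (rho (VFs, 0)) (rho (VFs, 1))) ->
  esimple_pullback X F -> esimple_pullback X G ->
  esimple_pullback X (fun M x => vf_tup (op M (vf_val (F M x)) (vf_val (G M x)))).
Proof.
move=> He eop HF HG.
have := esimple_pullback_term (f := fun M (p : tuple M [:: VFs; VFs]) => op M p.1 p.2.1)
  (esimple_set_full _) He eop.
by move/(esimple_pullback_comp (esimple_pullback_pair HF HG)); apply.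
Qed.

Lemma esimple_pullback_add ss (X : dset S ss) (F G : dfunc S ss [:: VFs]) :
  esimple_pullback X F -> esimple_pullback X G -> esimple_pullback X (fadd F G).
Proof.
by apply: (esimple_pullback_binop (e := tadd (tvar S VFs 0) (tvar S VFs 1))
  (op := fun M a b => a + b)%R).
Qed.

Lemma esimple_pullback_mul ss (X : dset S ss) (F G : dfunc S ss [:: VFs]) :
  esimple_pullback X F -> esimple_pullback X G -> esimple_pullback X (fmul F G).
Proof.
by apply: (esimple_pullback_binop (e := tmul (tvar S VFs 0) (tvar S VFs 1))
  (op := fun M a b => a * b)%R).
Qed.

Lemma esimple_pullback_opp ss (X : dset S ss) (F : dfunc S ss [:: VFs]) :
  esimple_pullback X F -> esimple_pullback X (fopp F).
Proof.
move=> HF; have := esimple_pullback_term (e := topp (tvar S VFs 0))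
  (f := fun M (p : tuple M [:: VFs]) => (- p.1)%R)
  (esimple_set_full [:: VFs]) (varset_hd _ _ _) (fun _ _ => erefl).
by move/(esimple_pullback_comp HF); apply.
Qed.

End Pullbacks.

Section StronglyDefinable.
Variables (S : sig) (T : formula S -> Prop).

Lemma estrong_restrict ss ts (X Z : dset S ss) (Y : dset S ts) (F : dfunc S ss ts) :
  estrong T X Y F -> esimple_set T Z ->
  (forall M, models T M -> forall x, Z M x -> X M x) -> estrong T Z Y F.
Proof.
move=> /[dup] /estrong_pullback HF [_ [[_ [HY [XY _]]] _]] HZ ZX.
apply: estrong_of_pullback (esimple_pullback_restrict HF HZ ZX) => // M HM x /(ZX _ HM).
exact: XY.
Qed.

Lemma estrong_comp ss ts us (X : dset S ss) (Y : dset S ts) (Z : dset S us)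
    (F : dfunc S ss ts) (G : dfunc S ts us) :
  estrong T X Y F -> estrong T Y Z G -> estrong T X Z (fun M x => G M (F M x)).
Proof.
move=> /[dup] /estrong_pullback HF [HX [[_ [_ [XY _]]] _]].
move=> /[dup] /estrong_pullback HG [_ [[_ [HZ [YZ _]]] _]].
apply: estrong_of_pullback (esimple_pullback_comp HF HG XY) => // M HM x /(XY _ HM).
exact: YZ.
Qed.

Lemma estrong_full ss ts (X : dset S ss) (F : dfunc S ss ts) :
  esimple_set T X -> esimple_pullback T X F -> estrong T X (@fullset S ts) F.
Proof. by move=> HX; apply: estrong_of_pullback => //; exists (ftrue S). Qed.

End StronglyDefinable.

Theorem lemma4p8 (S : sig) (T : formula S -> Prop) (HT : theory T) :
  (* (1) restriction to an exists-simple subset *)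
  (forall (ss ts : seq Lsort) (X Z : dset S ss) (Y : dset S ts) (F : dfunc S ss ts),
     estrong T X Y F -> esimple_set T Z ->
     (forall M, models T M -> forall x, Z M x -> X M x) ->
     estrong T Z Y F) /\
  (* (2) composition *)
  (forall (ss ts us : seq Lsort) (X : dset S ss) (Y : dset S ts) (Z : dset S us)
          (F : dfunc S ss ts) (G : dfunc S ts us),
     estrong T X Y F -> estrong T Y Z G ->
     estrong T X Z (fun M x => G M (F M x))) /\
  (* (3) the exists-strongly definable functions X -> VF form a ring *)
  (forall (ss : seq Lsort) (X : dset S ss),
     esimple_set T X ->
     estrong T X (@fullset S [:: VFs]) (@fzero S ss) /\
     estrong T X (@fullset S [:: VFs]) (@fone S ss) /\
     (forall F G : dfunc S ss [:: VFs],
        estrong T X (@fullset S [:: VFs]) F -> estrong T X (@fullset S [:: VFs]) G ->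
        estrong T X (@fullset S [:: VFs]) (fadd F G) /\
        estrong T X (@fullset S [:: VFs]) (fmul F G) /\
        estrong T X (@fullset S [:: VFs]) (fopp F))) /\
  (* (4) definable functions into RV_{n1} x ... x RV_{nr} with exists-simple graph *)
  (forall (ss : seq Lsort) (ns : seq nat) (X : dset S ss) (F : dfunc S ss (map RVs ns)),
     esimple_set T X ->
     definable_fun T X (@fullset S (map RVs ns)) F ->
     (exists phi, esimple phi /\ defines_graph T X F phi) ->
     estrong T X (@fullset S (map RVs ns)) F).
Proof.
split; [exact: estrong_restrict | split; [exact: estrong_comp | split]].
- move=> ss X HX; split; [|split].
  + exact/estrong_full/(esimple_pullback_term (e := t0 S) (f := fun M _ => 0%R)).
  + exact/estrong_full/(esimple_pullback_term (e := t1 S) (f := fun M _ => 1%R)).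
  move=> F G /estrong_pullback HF /estrong_pullback HG.
  split; [|split]; apply: estrong_full => //.
  + exact: esimple_pullback_add.
  + exact: esimple_pullback_mul.
  + exact: esimple_pullback_opp.
move=> ss ns X F HX _ [phi [ephi gphi]].
exact/estrong_full/(esimple_pullback_of_graph ephi gphi).
Qed.
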